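(* Let $q>1$ be an integer and $\xi$ a nonzero rational number. Then the real number $E_q(\xi)$ is either irrational or zero. If moreover $|\xi|<1$, then the real number $E_{q^{-1}}(\xi)$ is irrational.
   Context: For $Q\in\mathbb{C}$ not a root of unity, $n_Q=\frac{1-Q^n}{1-Q}$, $n_Q!=\prod_{k=1}^nk_Q$, and $E_Q(z)=\sum_{n\ge0}z^n/n_Q!$. For $q>1$, $E_q$ is entire and $E_{q^{-1}}$ converges for $|z|<q/(q-1)$. *)

From Stdlib Require Import Reals QArith Qreals.
From Coquelicot Require Import Coquelicot.
Open Scope R_scope.

Definition qnum (Q : R) (n : nat) : R := (1 - Q ^ n) / (1 - Q).

Fixpoint qfact (Q : R) (n : nat) : R :=
  match n with
  | O => 1
  | S k => qfact Q k * qnum Q (S k)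
  end.

Definition qexp (Q z : R) : R := Series (fun n => z ^ n / qfact Q n).

Definition is_rational (x : R) : Prop := exists r : Q, x = Q2R r.

From Stdlib Require Import Reals QArith Qreals Lia Lra Psatz Classical.
From Coquelicot Require Import Coquelicot.
Open Scope R_scope.

(* For an integer q >= 2 let f(y) = sum_M y^M / prod_(k<=M) (q^k - 1), so that
   E_q(z) = f((q-1) z) and f(q y) = (1 + y) f(y).  Using the functional equation one
   builds a polynomial A_n with A_n f = sum_M P_n(q^M) y^M / prod_(k<=M) (q^k - 1),
   where P_n(u) = prod_(1<=j<=n) (u - q^(n+j)): the coefficients of index n+1..2n
   vanish and those of index <= n are integers (Gaussian binomials).  For y = a/B with
   B >= a^2 + 1, if V f(y) were an integer with V <> 0, then V B^n (A_n f - first 2n+1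
   terms) would be a nonzero integer of size O((a^2/B)^n), which is absurd; the
   functional equation reduces any nonzero rational argument to that case.
   For the second claim, E_(1/q)(x) E_q(-x) is continuous at 0 and invariant under
   x -> x/q, hence equal to its value 1 at 0. *)

Definition is_int (x : R) : Prop := exists z : Z, x = IZR z.

Lemma is_int_IZR (z : Z) : is_int (IZR z).
Proof. now exists z. Qed.

Lemma is_int_INR (n : nat) : is_int (INR n).
Proof. rewrite INR_IZR_INZ; apply is_int_IZR. Qed.

Lemma is_int_plus x y : is_int x -> is_int y -> is_int (x + y).
Proof. intros [a ->] [b ->]; exists (a + b)%Z; now rewrite plus_IZR. Qed.

Lemma is_int_opp x : is_int x -> is_int (- x).
Proof. intros [a ->]; exists (- a)%Z; now rewrite opp_IZR. Qed.

Lemma is_int_minus x y : is_int x -> is_int y -> is_int (x - y).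
Proof. intros Hx Hy; apply is_int_plus; [exact Hx | now apply is_int_opp]. Qed.

Lemma is_int_mult x y : is_int x -> is_int y -> is_int (x * y).
Proof. intros [a ->] [b ->]; exists (a * b)%Z; now rewrite mult_IZR. Qed.

Lemma is_int_pow x n : is_int x -> is_int (x ^ n).
Proof.
  intros Hx; induction n as [|n IH]; simpl; [apply is_int_IZR | now apply is_int_mult].
Qed.

Lemma is_int_abs_lt_1 x : is_int x -> Rabs x < 1 -> x = 0.
Proof.
  intros [z ->] H. rewrite <- abs_IZR in H. apply lt_IZR in H.
  now replace z with 0%Z by lia.
Qed.

Lemma is_int_pos_ge_1 x : is_int x -> 0 < x -> 1 <= x.
Proof. intros [z ->] H. apply lt_IZR in H. apply IZR_le. lia. Qed.

Create HintDb is_int.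
#[local] Hint Resolve is_int_IZR is_int_INR is_int_plus is_int_opp is_int_minus
  is_int_mult is_int_pow : is_int.

Lemma pow_mul_div_pow a B n M : B <> 0 -> (M <= n)%nat ->
  B ^ n * (a / B) ^ M = a ^ M * B ^ (n - M).
Proof.
  intros HB HM. replace n with (M + (n - M))%nat at 1 by lia. rewrite pow_add.
  unfold Rdiv. rewrite Rpow_mult_distr, pow_inv. field. now apply pow_nonzero.
Qed.

Lemma pow_unbounded q X : 2 <= q -> exists m, X <= q ^ m.
Proof.
  intros Hq. destruct (INR_unbounded X) as [m Hm]. exists m.
  enough (INR m <= q ^ m) by lra.
  clear Hm. induction m as [|m IH]; [simpl; lra|].
  rewrite S_INR. simpl. assert (1 <= q ^ m) by (apply pow_R1_Rle; lra). nra.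
Qed.

(* Coquelicot's series lemmas at R: unification does not find the normed-module
   structure of R on its own. *)
Lemma is_series_ext_R (a b : nat -> R) l :
  (forall n, a n = b n) -> is_series a l -> is_series b l.
Proof. exact (is_series_ext (V := R_NormedModule) a b l). Qed.

Lemma is_series_plus_R (a b : nat -> R) la lb :
  is_series a la -> is_series b lb -> is_series (fun n => a n + b n) (la + lb).
Proof. exact (is_series_plus (V := R_NormedModule) a b la lb). Qed.

Lemma is_series_minus_R (a b : nat -> R) la lb :
  is_series a la -> is_series b lb -> is_series (fun n => a n - b n) (la - lb).
Proof. exact (is_series_minus (V := R_NormedModule) a b la lb). Qed.

Lemma is_series_scal_R (c : R) (a : nat -> R) l :
  is_series a l -> is_series (fun n => c * a n) (c * l).
Proof. exact (is_series_scal (V := R_NormedModule) c a l). Qed.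

Lemma is_series_decr_1_R (a : nat -> R) l :
  is_series (fun k => a (S k)) (l - a O) -> is_series a l.
Proof. exact (is_series_decr_1 (V := R_NormedModule) a l). Qed.

Lemma series_quarter_ratio_le (a : nat -> R) :
  (forall k, Rabs (a (S k)) <= / 4 * Rabs (a k)) ->
  ex_series a /\ Rabs (Series a) <= 4 / 3 * Rabs (a O).
Proof.
  intros H.
  assert (Hgeom : forall k, Rabs (a k) <= Rabs (a O) * (/ 4) ^ k).
  { induction k as [|k IH]; simpl; [lra|].
    assert (0 <= (/ 4) ^ k) by (apply pow_le; lra). specialize (H k). nra. }
  assert (Hg : is_series (fun k => Rabs (a O) * (/ 4) ^ k) (Rabs (a O) * / (1 - / 4))).
  { apply is_series_scal_R, is_series_geom.
    rewrite Rabs_pos_eq; lra. }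
  assert (Habs : ex_series (fun k => Rabs (a k))).
  { apply (ex_series_le (V := R_CompleteNormedModule) _ (fun k => Rabs (a O) * (/ 4) ^ k)).
    - intros k. change (norm (Rabs (a k))) with (Rabs (Rabs (a k))).
      rewrite Rabs_Rabsolu. apply Hgeom.
    - now exists (Rabs (a O) * / (1 - / 4)). }
  split; [now apply ex_series_Rabs|].
  apply Rle_trans with (Series (fun k => Rabs (a k))); [now apply Series_Rabs|].
  apply Rle_trans with (Series (fun k => Rabs (a O) * (/ 4) ^ k)).
  - apply Series_le; [intros k; split; [apply Rabs_pos | apply Hgeom]|].
    now exists (Rabs (a O) * / (1 - / 4)).
  - rewrite (is_series_unique _ _ Hg). right; field.
Qed.

Lemma series_quarter_ratio_bounds (a : nat -> R) :
  (forall k, Rabs (a (S k)) <= / 4 * Rabs (a k)) -> a O <> 0 ->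
  0 < Rabs (Series a) <= 4 / 3 * Rabs (a O).
Proof.
  intros H H0. destruct (series_quarter_ratio_le a H) as [Hex Hle]. split; [|exact Hle].
  rewrite Series_incr_1 by exact Hex.
  destruct (series_quarter_ratio_le (fun k => a (S k)) (fun k => H (S k))) as [_ Htail].
  pose proof (H O). pose proof (Rabs_pos_lt _ H0).
  pose proof (Rabs_triang_inv (a O) (- Series (fun k => a (S k)))) as Htri.
  rewrite Rabs_Ropp in Htri. unfold Rminus in Htri. rewrite Ropp_involutive in Htri.
  lra.
Qed.

Fixpoint qprod (q : R) (n : nat) : R :=
  match n with
  | O => 1
  | S k => qprod q k * (q ^ S k - 1)
  end.

Definition qser (q y : R) : R := PSeries (fun n => / qprod q n) y.

Fixpoint qpoch (q : R) (m : nat) (y : R) : R :=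
  match m with
  | O => 1
  | S k => qpoch q k y * (1 + q ^ k * y)
  end.

Lemma is_int_qprod q n : is_int q -> is_int (qprod q n).
Proof. intros Hq; induction n as [|n IH]; cbn [qprod]; auto 10 with is_int. Qed.

#[local] Hint Resolve is_int_qprod : is_int.

(* The quotient is a Gaussian binomial coefficient; its integrality is the q-Pascal rule. *)
Lemma qprod_add_dvd q s m : is_int q ->
  exists z, qprod q (s + m) = IZR z * qprod q s * qprod q m.
Proof.
  intros [qz Hqz]. revert m. induction s as [|s IHs]; intros m.
  - exists 1%Z. simpl. ring.
  - induction m as [|m IHm].
    + exists 1%Z. rewrite Nat.add_0_r. simpl. ring.
    + destruct (IHs (S m)) as [z1 H1]. destruct IHm as [z2 H2].
      exists (qz ^ Z.of_nat (S m) * z1 + z2)%Z.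
      rewrite plus_IZR, mult_IZR, <- pow_IZR, <- Hqz.
      replace (S s + S m)%nat with (S (s + S m)) by lia.
      replace (S s + m)%nat with (s + S m)%nat in H2 by lia.
      change (qprod q (S (s + S m))) with (qprod q (s + S m) * (q ^ S (s + S m) - 1)).
      replace (S (s + S m)) with (S s + S m)%nat by lia. rewrite pow_add.
      transitivity (q ^ S m * (q ^ S s - 1) * qprod q (s + S m)
                    + (q ^ S m - 1) * qprod q (s + S m)); [ring|].
      rewrite H1 at 1. rewrite H2. simpl. ring.
Qed.

Lemma is_int_qpoch q m a B : is_int q -> is_int a -> is_int B -> B <> 0 ->
  is_int (B ^ m * qpoch q m (a / B)).
Proof.
  intros Hq Ha HB HB0.
  induction m as [|m IH]; simpl qpoch; [rewrite Rmult_1_r; auto 10 with is_int|].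
  replace (B ^ S m * (qpoch q m (a / B) * (1 + q ^ m * (a / B))))
    with ((B ^ m * qpoch q m (a / B)) * (B + q ^ m * a)) by (simpl; field; exact HB0).
  auto 10 with is_int.
Qed.

Section QProd.

Variable q : R.
Hypothesis q_ge_2 : 2 <= q.

Lemma pow_S_ge_2 n : 2 <= q ^ S n.
Proof. simpl. assert (1 <= q ^ n) by (apply pow_R1_Rle; lra). nra. Qed.

Lemma pow_le_pow_S_sub_1 n : q ^ n <= q ^ S n - 1.
Proof. simpl. assert (1 <= q ^ n) by (apply pow_R1_Rle; lra). nra. Qed.

Lemma qprod_pos n : 0 < qprod q n.
Proof.
  induction n as [|n IH]; cbn [qprod]; [lra|].
  pose proof (pow_S_ge_2 n). apply Rmult_lt_0_compat; lra.
Qed.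

Lemma qprod_odd_ge m : (q ^ (2 * m + 1)) ^ m <= qprod q (2 * m + 1).
Proof.
  induction m as [|m IH]; [simpl; lra|].
  replace (2 * S m + 1)%nat with (S (S (2 * m + 1))) by lia. cbn [qprod].
  replace ((q ^ S (S (2 * m + 1))) ^ S m)
    with ((q ^ (2 * m + 1)) ^ m * q ^ (2 * m + 1) * q ^ S (2 * m + 1))
    by (rewrite <- !pow_mult, <- !pow_add; f_equal; nia).
  pose proof (pow_le_pow_S_sub_1 (2 * m + 1)).
  pose proof (pow_le_pow_S_sub_1 (S (2 * m + 1))).
  assert (0 <= (q ^ (2 * m + 1)) ^ m) by (apply pow_le, pow_le; lra).
  assert (0 <= q ^ (2 * m + 1)) by (apply pow_le; lra).
  apply Rmult_le_compat; [apply Rmult_le_pos; lra | apply pow_le; lra | | lra].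
  apply Rmult_le_compat; lra.
Qed.

Lemma CV_radius_qser : CV_radius (fun n => / qprod q n) = p_infty.
Proof.
  apply CV_radius_infinite_DAlembert.
  - intros n; apply Rgt_not_eq, Rinv_0_lt_compat, qprod_pos.
  - apply is_lim_seq_le_le with (u := fun _ => 0) (w := fun n => (/ 2) ^ n).
    + intros n. pose proof (qprod_pos n). pose proof (pow_S_ge_2 n).
      replace (/ qprod q (S n) / / qprod q n) with (/ (q ^ S n - 1))
        by (cbn [qprod]; field; split; lra).
      rewrite Rabs_pos_eq by (left; apply Rinv_0_lt_compat; lra).
      split; [left; apply Rinv_0_lt_compat; lra|].
      rewrite pow_inv. apply Rinv_le_contravar; [apply pow_lt; lra|].
      assert (2 ^ n <= q ^ n) by (apply pow_incr; lra).
      assert (1 <= 2 ^ n) by (apply pow_R1_Rle; lra).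
      simpl. nra.
    + apply is_lim_seq_const.
    + apply is_lim_seq_geom. rewrite Rabs_pos_eq; lra.
Qed.

Lemma is_series_qser y : is_series (fun n => / qprod q n * y ^ n) (qser q y).
Proof.
  apply Series_correct, ex_pseries_R, CV_radius_inside.
  rewrite CV_radius_qser. exact I.
Qed.

Lemma qser_mul_q y : qser q (q * y) = (1 + y) * qser q y.
Proof.
  apply is_series_unique.
  set (t := fun n => match n with O => 0 | S k => y * (/ qprod q k * y ^ k) end).
  assert (Ht : is_series t (y * qser q y)).
  { apply is_series_decr_1_R. simpl t. rewrite Rminus_0_r.
    apply is_series_scal_R, is_series_qser. }
  replace ((1 + y) * qser q y) with (qser q y + y * qser q y) by ring.
  eapply is_series_ext_R; [|apply is_series_plus_R; [apply is_series_qser | exact Ht]].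
  intros [|n]; simpl t; [simpl; ring|].
  pose proof (pow_S_ge_2 n). pose proof (qprod_pos n).
  cbn [qprod]. rewrite Rpow_mult_distr. change (y ^ S n) with (y * y ^ n).
  field. split; lra.
Qed.

Lemma qser_mul_pow m y : qser q (q ^ m * y) = qpoch q m y * qser q y.
Proof.
  induction m as [|m IH]; simpl; [now rewrite !Rmult_1_l|].
  rewrite Rmult_assoc, qser_mul_q, IH. ring.
Qed.

End QProd.

Section Pade.

Variables (q : R) (n : nat).
Hypothesis q_ge_2 : 2 <= q.

Fixpoint pade_poly (k : nat) (u : R) : R :=
  match k with
  | O => 1
  | S k' => pade_poly k' u * (u - q ^ (n + S k'))
  end.

(* The step k' -> S k' is g(y) |-> g(q y) - q^(n+S k') g(y) applied to g = pade_mult k' * f,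
   rewritten with f(q y) = (1+y) f(y); it multiplies the M-th coefficient by q^M - q^(n+S k'). *)
Fixpoint pade_mult (k : nat) (y : R) : R :=
  match k with
  | O => 1
  | S k' => (1 + y) * pade_mult k' (q * y) - q ^ (n + S k') * pade_mult k' y
  end.

Definition pade_term (y : R) (M : nat) : R := / qprod q M * pade_poly n (q ^ M) * y ^ M.

Lemma is_series_pade k y :
  is_series (fun M => / qprod q M * pade_poly k (q ^ M) * y ^ M) (pade_mult k y * qser q y).
Proof.
  revert y. induction k as [|k IH]; intros y; simpl pade_mult.
  - rewrite Rmult_1_l. eapply is_series_ext_R; [|apply is_series_qser, q_ge_2].
    intros M; simpl; ring.
  - replace (((1 + y) * pade_mult k (q * y) - q ^ (n + S k) * pade_mult k y) * qser q y)
      with (pade_mult k (q * y) * qser q (q * y) - q ^ (n + S k) * (pade_mult k y * qser q y))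
      by (rewrite qser_mul_q by exact q_ge_2; ring).
    eapply is_series_ext_R; [|apply is_series_minus_R; [apply IH | apply is_series_scal_R, IH]].
    intros M; cbv beta; simpl pade_poly; rewrite Rpow_mult_distr; ring.
Qed.

Lemma pade_poly_root k j : (1 <= j <= k)%nat -> pade_poly k (q ^ (n + j)) = 0.
Proof.
  induction k as [|k IH]; intros Hj; [lia|]. simpl pade_poly.
  destruct (Nat.eq_dec j (S k)) as [->|Hne]; [ring|].
  rewrite IH by lia. ring.
Qed.

Lemma pade_poly_low_pow M k : (M <= n)%nat ->
  pade_poly k (q ^ M) * qprod q (n - M) = (- q ^ M) ^ k * qprod q (n - M + k).
Proof.
  intros HM. induction k as [|k IH]; [simpl; now rewrite Nat.add_0_r, Rmult_1_l|].
  replace (n - M + S k)%nat with (S (n - M + k)) by lia.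
  simpl pade_poly. cbn [qprod].
  transitivity (pade_poly k (q ^ M) * qprod q (n - M) * (q ^ M - q ^ (n + S k))); [ring|].
  rewrite IH. replace (n + S k)%nat with (M + S (n - M + k))%nat by lia.
  rewrite pow_add. simpl. ring.
Qed.

Lemma is_int_pade_coef M : is_int q -> (M <= n)%nat -> is_int (/ qprod q M * pade_poly n (q ^ M)).
Proof.
  intros Hq HM.
  destruct (qprod_add_dvd q (n - M) n Hq) as [z1 E1].
  destruct (qprod_add_dvd q M (n - M) Hq) as [z2 E2].
  replace (M + (n - M))%nat with n in E2 by lia.
  pose proof (qprod_pos q q_ge_2 M). pose proof (qprod_pos q q_ge_2 (n - M)).
  assert (E : pade_poly n (q ^ M)
              = (- q ^ M) ^ n * IZR z1 * IZR z2 * qprod q M * qprod q (n - M)).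
  { apply (Rmult_eq_reg_r (qprod q (n - M))); [|lra].
    rewrite pade_poly_low_pow, E1, E2 by exact HM. ring. }
  rewrite E.
  replace (/ qprod q M * ((- q ^ M) ^ n * IZR z1 * IZR z2 * qprod q M * qprod q (n - M)))
    with ((- q ^ M) ^ n * IZR z1 * IZR z2 * qprod q (n - M)) by (field; lra).
  auto 10 with is_int.
Qed.

Lemma is_int_pade_mult k a B : is_int q -> is_int a -> is_int B -> B <> 0 ->
  is_int (B ^ k * pade_mult k (a / B)).
Proof.
  intros Hq. revert a. induction k as [|k IH]; intros a Ha HB HB0; simpl pade_mult.
  - rewrite Rmult_1_r. auto 10 with is_int.
  - replace (q * (a / B)) with (q * a / B) by (field; exact HB0).
    replace (B ^ S k * ((1 + a / B) * pade_mult k (q * a / B)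
                        - q ^ (n + S k) * pade_mult k (a / B)))
      with ((B + a) * (B ^ k * pade_mult k (q * a / B))
            - q ^ (n + S k) * B * (B ^ k * pade_mult k (a / B)))
      by (simpl; field; exact HB0).
    apply is_int_minus; apply is_int_mult; auto 10 with is_int.
Qed.

Lemma pade_poly_bounds k M : (n + k < M)%nat -> 0 < pade_poly k (q ^ M) <= (q ^ M) ^ k.
Proof.
  induction k as [|k IH]; intros HM; [simpl; lra|].
  simpl pade_poly. simpl pow. destruct IH as [H1 H2]; [lia|].
  assert (q ^ (n + S k) < q ^ M) by (apply Rlt_pow; lia || lra).
  assert (0 < q ^ (n + S k)) by (apply pow_lt; lra).
  split; [apply Rmult_lt_0_compat; lra|].
  rewrite (Rmult_comm (q ^ M)). apply Rmult_le_compat; lra.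
Qed.

Lemma pade_poly_S_le k M : (n + k < M)%nat ->
  pade_poly k (q ^ S M) <= (2 * q) ^ k * pade_poly k (q ^ M).
Proof.
  induction k as [|k IH]; intros HM; [simpl; lra|].
  simpl pade_poly. change ((2 * q) ^ S k) with (2 * q * (2 * q) ^ k).
  pose proof (pade_poly_bounds k (S M) ltac:(lia)) as [HS _].
  pose proof (pade_poly_bounds k M ltac:(lia)) as [H0 _].
  specialize (IH ltac:(lia)).
  set (i := (n + S k)%nat) in *.
  assert (q ^ S i <= q ^ M) by (apply Rle_pow; lia || lra).
  assert (0 < q ^ i) by (apply pow_lt; lra).
  assert (q ^ i < q ^ M) by (apply Rlt_pow; lia || lra).
  simpl pow in *.
  assert (Hfac : q * q ^ M - q ^ i <= 2 * q * (q ^ M - q ^ i)) by nra.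
  assert (0 <= q * q ^ M - q ^ i) by nra.
  apply Rle_trans with ((2 * q) ^ k * pade_poly k (q ^ M) * (2 * q * (q ^ M - q ^ i)));
    [apply Rmult_le_compat; lra | right; ring].
Qed.

Lemma pade_term_S_le y M : Rabs y <= / 2 -> (2 * n < M)%nat ->
  Rabs (pade_term y (S M)) <= / 4 * Rabs (pade_term y M).
Proof.
  intros Hy HM.
  pose proof (pade_poly_bounds n M ltac:(lia)) as [HP _].
  pose proof (pade_poly_bounds n (S M) ltac:(lia)) as [HPS _].
  pose proof (pade_poly_S_le n M ltac:(lia)) as HPle.
  pose proof (qprod_pos q q_ge_2 M). pose proof (pow_S_ge_2 q q_ge_2 M).
  assert (E : pade_term y (S M) = pade_term y M
      * (pade_poly n (q ^ S M) / pade_poly n (q ^ M)) * (y / (q ^ S M - 1))).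
  { unfold pade_term. cbn [qprod]. change (y ^ S M) with (y * y ^ M).
    field. repeat split; lra. }
  assert (Hpoly : Rabs (pade_poly n (q ^ S M) / pade_poly n (q ^ M)) <= (2 * q) ^ n).
  { rewrite Rabs_pos_eq by (apply Rlt_le, Rdiv_lt_0_compat; lra).
    apply Rmult_le_reg_r with (pade_poly n (q ^ M)); [lra|].
    unfold Rdiv. rewrite Rmult_assoc, Rinv_l; lra. }
  assert (Hfrac : Rabs (y / (q ^ S M - 1)) <= / 2 / (q ^ S M - 1)).
  { rewrite Rabs_div, (Rabs_pos_eq (q ^ S M - 1)) by lra.
    apply Rmult_le_compat_r; [apply Rlt_le, Rinv_0_lt_compat; lra | exact Hy]. }
  assert (Hfac : (2 * q) ^ n * (/ 2 / (q ^ S M - 1)) <= / 4).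
  { assert ((2 * q) ^ n <= q ^ (2 * n)).
    { rewrite pow_mult. apply pow_incr. simpl. nra. }
    assert (4 * q ^ (2 * n) <= q ^ S M).
    { apply Rle_trans with (q ^ (2 * n + 2)).
      - rewrite pow_add. assert (0 <= q ^ (2 * n)) by (apply pow_le; lra).
        replace (q ^ 2) with (q * q) by ring. assert (4 <= q * q) by nra. nra.
      - apply Rle_pow; lia || lra. }
    assert (1 <= q ^ (2 * n)) by (apply pow_R1_Rle; lra).
    replace (/ 4) with ((q ^ S M - 1) / 2 * (/ 2 / (q ^ S M - 1))) by (field; lra).
    apply Rmult_le_compat_r; [apply Rlt_le, Rdiv_lt_0_compat; lra | lra]. }
  rewrite E, !Rabs_mult.
  apply Rle_trans with (Rabs (pade_term y M) * ((2 * q) ^ n * (/ 2 / (q ^ S M - 1)))).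
  - rewrite Rmult_assoc. apply Rmult_le_compat_l; [apply Rabs_pos|].
    apply Rmult_le_compat; auto using Rabs_pos.
  - rewrite Rmult_comm. apply Rmult_le_compat_r; [apply Rabs_pos | exact Hfac].
Qed.

Lemma pade_term_first_le y : Rabs (pade_term y (2 * n + 1)) <= Rabs y ^ (2 * n + 1).
Proof.
  unfold pade_term. rewrite !Rabs_mult, <- RPow_abs.
  pose proof (pade_poly_bounds n (2 * n + 1) ltac:(lia)) as [HP0 HP].
  pose proof (qprod_odd_ge q q_ge_2 n). pose proof (qprod_pos q q_ge_2 (2 * n + 1)).
  rewrite Rabs_pos_eq by (apply Rlt_le, Rinv_0_lt_compat; lra).
  rewrite (Rabs_pos_eq (pade_poly _ _)) by lra.
  assert (/ qprod q (2 * n + 1) * pade_poly n (q ^ (2 * n + 1)) <= 1).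
  { apply Rmult_le_reg_l with (qprod q (2 * n + 1)); [lra|].
    rewrite <- Rmult_assoc, Rinv_r; lra. }
  assert (0 <= Rabs y ^ (2 * n + 1)) by (apply pow_le, Rabs_pos).
  assert (0 <= / qprod q (2 * n + 1)) by (apply Rlt_le, Rinv_0_lt_compat; lra).
  nra.
Qed.

Lemma pade_term_first_neq_0 y : y <> 0 -> pade_term y (2 * n + 1) <> 0.
Proof.
  intros Hy. unfold pade_term.
  pose proof (pade_poly_bounds n (2 * n + 1) ltac:(lia)) as [HP _].
  pose proof (qprod_pos q q_ge_2 (2 * n + 1)).
  repeat apply Rmult_integral_contrapositive_currified.
  - apply Rinv_neq_0_compat; lra.
  - lra.
  - now apply pow_nonzero.
Qed.

Lemma is_int_pade_term a B M : is_int q -> is_int a -> is_int B -> B <> 0 -> (M <= 2 * n)%nat ->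
  is_int (B ^ n * pade_term (a / B) M).
Proof.
  intros Hq Ha HB HB0 HM. unfold pade_term.
  destruct (Compare_dec.le_lt_dec M n) as [Hle | Hlt].
  - replace (B ^ n * (/ qprod q M * pade_poly n (q ^ M) * (a / B) ^ M))
      with ((/ qprod q M * pade_poly n (q ^ M)) * (B ^ n * (a / B) ^ M)) by ring.
    rewrite pow_mul_div_pow by assumption.
    apply is_int_mult; [now apply is_int_pade_coef | auto 10 with is_int].
  - replace M with (n + (M - n))%nat by lia. rewrite pade_poly_root by lia.
    rewrite !Rmult_0_r, Rmult_0_l, Rmult_0_r. apply is_int_IZR.
Qed.

Lemma is_int_pade_partial_sum a B N : is_int q -> is_int a -> is_int B -> B <> 0 ->
  (N <= 2 * n)%nat -> is_int (B ^ n * sum_f_R0 (pade_term (a / B)) N).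
Proof.
  intros Hq Ha HB HB0. induction N as [|N IH]; intros HN.
  - now apply is_int_pade_term.
  - rewrite tech5, Rmult_plus_distr_l.
    apply is_int_plus; [apply IH; lia | now apply is_int_pade_term].
Qed.

Lemma pade_remainder_bounds y : y <> 0 -> Rabs y <= / 2 ->
  0 < Rabs (pade_mult n y * qser q y - sum_f_R0 (pade_term y) (2 * n))
    <= 4 / 3 * Rabs y ^ (2 * n + 1).
Proof.
  intros Hy0 Hy.
  pose proof (is_series_pade n y) as HS.
  change (is_series (pade_term y) (pade_mult n y * qser q y)) in HS.
  rewrite <- (is_series_unique _ _ HS).
  rewrite (Series_incr_n _ (2 * n + 1)) by (lia || now exists (pade_mult n y * qser q y)).
  replace (pred (2 * n + 1)) with (2 * n)%nat by lia.
  match goal with |- context [Series ?tail] => set (rem := Series tail) end.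
  replace (sum_f_R0 (pade_term y) (2 * n) + rem - sum_f_R0 (pade_term y) (2 * n)) with rem by ring.
  pose proof (pade_term_first_le y).
  assert (0 < Rabs rem <= 4 / 3 * Rabs (pade_term y (2 * n + 1 + 0))).
  { apply series_quarter_ratio_bounds.
    - intros k. replace (2 * n + 1 + S k)%nat with (S (2 * n + 1 + k)) by lia.
      apply pade_term_S_le; [exact Hy | lia].
    - rewrite Nat.add_0_r. now apply pade_term_first_neq_0. }
  rewrite Nat.add_0_r in *. lra.
Qed.

End Pade.

Lemma is_int_pade_remainder q n a B V : is_int q -> 2 <= q -> is_int a -> is_int B -> B <> 0 ->
  is_int V -> is_int (V * qser q (a / B)) ->
  is_int (V * B ^ n * (pade_mult q n n (a / B) * qser q (a / B)
                       - sum_f_R0 (pade_term q n (a / B)) (2 * n))).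
Proof.
  intros Hq Hq2 Ha HB HB0 HV HVf.
  replace (V * B ^ n * (pade_mult q n n (a / B) * qser q (a / B)
                        - sum_f_R0 (pade_term q n (a / B)) (2 * n)))
    with (V * qser q (a / B) * (B ^ n * pade_mult q n n (a / B))
          - V * (B ^ n * sum_f_R0 (pade_term q n (a / B)) (2 * n))) by ring.
  apply is_int_minus; apply is_int_mult; trivial.
  - now apply is_int_pade_mult.
  - apply is_int_pade_partial_sum; trivial; lia.
Qed.

Lemma pow_mul_abs_div_pow_odd a B n : 0 < B ->
  B ^ n * Rabs (a / B) ^ (2 * n + 1) = Rabs (a / B) * (a ^ 2 / B) ^ n.
Proof.
  intros HB. rewrite pow_add, pow_mult, pow2_abs, pow_1.
  replace (B ^ n * (((a / B) ^ 2) ^ n * Rabs (a / B)))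
    with (Rabs (a / B) * (B * (a / B) ^ 2) ^ n) by (rewrite Rpow_mult_distr; ring).
  f_equal. f_equal. field. lra.
Qed.

Lemma abs_div_le_half a B : a ^ 2 + 1 <= B -> Rabs (a / B) <= / 2.
Proof.
  intros HaB. assert (HB0 : 0 < B) by (pose proof (pow2_ge_0 a); lra).
  rewrite Rabs_div, (Rabs_pos_eq B) by lra.
  apply Rmult_le_reg_r with B; [exact HB0|]. unfold Rdiv. rewrite Rmult_assoc, Rinv_l by lra.
  rewrite <- pow2_abs in HaB. pose proof (pow2_ge_0 (Rabs a - 1)). nra.
Qed.

Lemma exists_mul_pow_lt_1 K rho : 0 <= K -> 0 <= rho < 1 -> exists n, K * rho ^ n < 1.
Proof.
  intros HK Hrho.
  destruct (pow_lt_1_zero rho ltac:(rewrite Rabs_pos_eq; lra) (/ (K + 1))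
     ltac:(apply Rinv_0_lt_compat; lra)) as [n Hn].
  exists n. specialize (Hn n (le_n n)). rewrite Rabs_pos_eq in Hn by (apply pow_le; lra).
  assert (0 <= rho ^ n) by (apply pow_le; lra).
  assert (Hn' : rho ^ n * (K + 1) < / (K + 1) * (K + 1)) by (apply Rmult_lt_compat_r; lra).
  rewrite Rinv_l in Hn' by lra. nra.
Qed.

Lemma qser_int_multiple_small q a B V : is_int q -> 2 <= q -> is_int a -> is_int B ->
  a <> 0 -> a ^ 2 + 1 <= B -> is_int V -> is_int (V * qser q (a / B)) -> V = 0.
Proof.
  intros Hq Hq2 Ha HB Ha0 HaB HV HVf.
  assert (HB0 : 0 < B) by (pose proof (pow2_ge_0 a); lra).
  set (y := a / B) in *.
  assert (Hy0 : y <> 0) by (apply Rmult_integral_contrapositive_currified;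
    [exact Ha0 | apply Rinv_neq_0_compat; lra]).
  assert (Hy : Rabs y <= / 2) by (now apply abs_div_le_half).
  set (rho := a ^ 2 / B).
  assert (Hrho : 0 <= rho < 1).
  { split; [apply Rdiv_le_0_compat; [apply pow2_ge_0 | exact HB0]|].
    apply Rmult_lt_reg_r with B; [exact HB0|]. unfold rho, Rdiv.
    rewrite Rmult_assoc, Rinv_l; lra. }
  set (K := 4 / 3 * Rabs V * Rabs y).
  assert (HK : 0 <= K) by (pose proof (Rabs_pos V); pose proof (Rabs_pos y); unfold K; nra).
  destruct (exists_mul_pow_lt_1 K rho HK Hrho) as [n HKn].
  pose proof (pade_remainder_bounds q n Hq2 y Hy0 Hy) as [Hrem0 Hrem].
  set (rem := pade_mult q n n y * qser q y - sum_f_R0 (pade_term q n y) (2 * n)) in *.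
  assert (HI : is_int (V * B ^ n * rem))
    by (apply is_int_pade_remainder; trivial; lra).
  assert (HIlt : Rabs (V * B ^ n * rem) < 1).
  { rewrite !Rabs_mult, <- RPow_abs, (Rabs_pos_eq B) by lra.
    apply Rle_lt_trans with (K * rho ^ n); [|exact HKn].
    replace (K * rho ^ n) with (Rabs V * B ^ n * (4 / 3 * Rabs y ^ (2 * n + 1))).
    - apply Rmult_le_compat_l; [|exact Hrem].
      apply Rmult_le_pos; [apply Rabs_pos | apply pow_le; lra].
    - transitivity (4 / 3 * Rabs V * (B ^ n * Rabs y ^ (2 * n + 1))); [ring|].
      unfold y. rewrite pow_mul_abs_div_pow_odd by exact HB0. unfold K, rho, y. ring. }
  destruct (Rmult_integral _ _ (is_int_abs_lt_1 _ HI HIlt)) as [H | H].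
  - destruct (Rmult_integral _ _ H) as [HV0 | HBn]; [exact HV0|].
    exfalso. revert HBn. apply pow_nonzero. lra.
  - rewrite H, Rabs_R0 in Hrem0. lra.
Qed.

Lemma qser_int_multiple q a b V : is_int q -> 2 <= q -> is_int a -> is_int b -> 0 < b ->
  a <> 0 -> qser q (a / b) <> 0 -> is_int V -> is_int (V * qser q (a / b)) -> V = 0.
Proof.
  intros Hq Hq2 Ha Hb Hb0 Ha0 Hf HV HVf.
  destruct (pow_unbounded q (a ^ 2 + 1) Hq2) as [m Hm].
  set (B := b * q ^ m).
  assert (Hqm : 1 <= q ^ m) by (apply pow_R1_Rle; lra).
  assert (HB0 : 0 < B) by (unfold B; apply Rmult_lt_0_compat; lra).
  assert (Hx : a / b = q ^ m * (a / B)) by (unfold B; field; split; lra).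
  rewrite Hx, qser_mul_pow in Hf, HVf by exact Hq2.
  assert (Hpoch : qpoch q m (a / B) <> 0) by (intros E; apply Hf; rewrite E; ring).
  assert (HBm : B ^ m <> 0) by (apply pow_nonzero; lra).
  assert (HBint : is_int B) by (unfold B; auto 10 with is_int).
  enough (V * (B ^ m * qpoch q m (a / B)) = 0) as E.
  { destruct (Rmult_integral _ _ E) as [| E']; [assumption|].
    destruct (Rmult_integral _ _ E'); contradiction. }
  apply (qser_int_multiple_small q a B); trivial.
  - pose proof (is_int_pos_ge_1 b Hb Hb0).
    assert (0 <= (b - 1) * q ^ m) by (apply Rmult_le_pos; lra).
    unfold B. lra.
  - apply is_int_mult; [exact HV | apply is_int_qpoch; trivial; lra].
  - replace (V * (B ^ m * qpoch q m (a / B)) * qser q (a / B))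
      with (V * (qpoch q m (a / B) * qser q (a / B)) * B ^ m) by ring.
    auto with is_int.
Qed.

Lemma qfact_qprod Q n : Q <> 1 -> qfact Q n = qprod Q n / (Q - 1) ^ n.
Proof.
  intros HQ. induction n as [|n IH]; [simpl; field|].
  simpl qfact. rewrite IH. unfold qnum. cbn [qprod].
  change ((Q - 1) ^ S n) with ((Q - 1) * (Q - 1) ^ n).
  assert ((Q - 1) ^ n <> 0) by (apply pow_nonzero; lra).
  field. split; [assumption | lra].
Qed.

Lemma qexp_qser Q z : 2 <= Q -> qexp Q z = qser Q ((Q - 1) * z).
Proof.
  intros HQ. unfold qexp, qser, PSeries. apply Series_ext. intros n.
  rewrite qfact_qprod by lra. rewrite Rpow_mult_distr.
  pose proof (qprod_pos Q HQ n). assert ((Q - 1) ^ n <> 0) by (apply pow_nonzero; lra).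
  field. split; lra.
Qed.

Lemma qexp_irrational (q : nat) (xi : Q) : (1 < q)%nat -> Q2R xi <> 0 ->
  qexp (INR q) (Q2R xi) <> 0 -> ~ is_rational (qexp (INR q) (Q2R xi)).
Proof.
  intros Hq Hxi Hne [r Hr].
  assert (HQ : 2 <= INR q) by (apply (le_INR 2) in Hq; simpl in Hq; lra).
  assert (Hden : forall s : Q, 0 < IZR (QDen s)) by (intros s; apply IZR_lt, Pos2Z.is_pos).
  rewrite qexp_qser in Hne, Hr by exact HQ.
  replace ((INR q - 1) * Q2R xi) with ((INR q - 1) * IZR (Qnum xi) / IZR (QDen xi))
    in Hne, Hr by (unfold Q2R, Rdiv; ring).
  enough (IZR (QDen r) = 0) by (specialize (Hden r); lra).
  apply (qser_int_multiple (INR q) ((INR q - 1) * IZR (Qnum xi)) (IZR (QDen xi)));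
    auto with is_int.
  - apply Rmult_integral_contrapositive_currified; [lra|].
    intros E. apply Hxi. unfold Q2R. rewrite E. ring.
  - rewrite Hr. exists (Qnum r). unfold Q2R. specialize (Hden r). field. lra.
Qed.

Section QExpInv.

Variable Q : R.
Hypothesis Q_ge_2 : 2 <= Q.

Definition qexp_inv_coef (n : nat) : R := / qfact (/ Q) n.

Lemma inv_pos_lt_1 : 0 < / Q < 1.
Proof.
  split; [apply Rinv_0_lt_compat; lra|].
  rewrite <- Rinv_1. apply Rinv_1_lt_contravar; lra.
Qed.

Lemma inv_pow_S_lt_1 k : (/ Q) ^ S k < 1.
Proof.
  pose proof inv_pos_lt_1.
  pose proof (pow_lt_1_compat (/ Q) (S k) ltac:(lra) ltac:(lia)). lra.
Qed.

Lemma qfact_inv_pos n : 0 < qfact (/ Q) n.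
Proof.
  pose proof inv_pos_lt_1. induction n as [|n IH]; simpl qfact; [lra|].
  apply Rmult_lt_0_compat; [exact IH|]. unfold qnum.
  pose proof (inv_pow_S_lt_1 n). apply Rdiv_lt_0_compat; lra.
Qed.

Lemma qexp_inv_coef_S n :
  qexp_inv_coef (S n) * (1 - (/ Q) ^ S n) = (1 - / Q) * qexp_inv_coef n.
Proof.
  unfold qexp_inv_coef. simpl qfact. unfold qnum.
  pose proof inv_pos_lt_1. pose proof (inv_pow_S_lt_1 n). pose proof (qfact_inv_pos n).
  field. repeat split; lra.
Qed.

Lemma qexp_inv_coef_pos n : 0 < qexp_inv_coef n.
Proof. apply Rinv_0_lt_compat, qfact_inv_pos. Qed.

Lemma CV_radius_qexp_inv_coef : Rbar_lt 1 (CV_radius qexp_inv_coef).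
Proof.
  pose proof inv_pos_lt_1.
  rewrite (CV_radius_finite_DAlembert _ (1 - / Q)).
  - simpl. rewrite <- Rinv_1 at 1. apply Rinv_lt_contravar; lra.
  - intros n; apply Rgt_not_eq, qexp_inv_coef_pos.
  - lra.
  - apply is_lim_seq_ext with (fun n => (1 - / Q) * / (1 - (/ Q) ^ S n)).
    + intros n. pose proof (qexp_inv_coef_S n) as Hrec.
      pose proof (qexp_inv_coef_pos n) as Hpos. pose proof (inv_pow_S_lt_1 n) as Hlt.
      replace (qexp_inv_coef (S n)) with ((1 - / Q) * qexp_inv_coef n / (1 - (/ Q) ^ S n))
        by (rewrite <- Hrec; field; lra).
      rewrite Rabs_pos_eq; [field; split; lra|].
      apply Rlt_le, Rdiv_lt_0_compat; [|exact Hpos].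
      apply Rdiv_lt_0_compat; [apply Rmult_lt_0_compat|]; lra.
    + assert (Hinv : is_lim_seq (fun n => / (1 - (/ Q) ^ S n)) (Rbar_inv (Finite (1 - 0)))).
      { apply is_lim_seq_inv; [|simpl; intros E; injection E; lra].
        apply is_lim_seq_minus'; [apply is_lim_seq_const|].
        apply (is_lim_seq_incr_1 (fun n => (/ Q) ^ n)), is_lim_seq_geom.
        rewrite Rabs_pos_eq; lra. }
      pose proof (is_lim_seq_scal_l _ (1 - / Q) _ Hinv) as L. simpl in L.
      now replace ((1 - / Q) * / (1 - 0)) with (1 - / Q) in L by (field; lra).
Qed.

Lemma abs_lt_CV_radius_qexp_inv_coef x :
  Rabs x < 1 -> Rbar_lt (Rabs x) (CV_radius qexp_inv_coef).
Proof. intros Hx. apply (Rbar_lt_trans _ 1); [exact Hx | exact CV_radius_qexp_inv_coef]. Qed.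

Lemma qexp_inv_PSeries x : qexp (/ Q) x = PSeries qexp_inv_coef x.
Proof.
  unfold qexp, PSeries, qexp_inv_coef. apply Series_ext. intros n.
  pose proof (qfact_inv_pos n). field. lra.
Qed.

Lemma is_series_qexp_inv x : Rabs x < 1 ->
  is_series (fun n => qexp_inv_coef n * x ^ n) (qexp (/ Q) x).
Proof.
  intros Hx. rewrite qexp_inv_PSeries.
  now apply Series_correct, ex_pseries_R, CV_radius_inside, abs_lt_CV_radius_qexp_inv_coef.
Qed.

Lemma qexp_inv_div x : Rabs x < 1 -> qexp (/ Q) (x / Q) = (1 - (1 - / Q) * x) * qexp (/ Q) x.
Proof.
  intros Hx. pose proof inv_pos_lt_1.
  assert (Hx' : Rabs (x / Q) < 1).
  { unfold Rdiv. rewrite Rabs_mult, (Rabs_pos_eq (/ Q)) by lra.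
    pose proof (Rabs_pos x). nra. }
  set (t := fun n => match n with
                     | O => 0
                     | S k => (1 - / Q) * x * (qexp_inv_coef k * x ^ k)
                     end).
  assert (Ht : is_series t ((1 - / Q) * x * qexp (/ Q) x)).
  { apply is_series_decr_1_R. simpl t. rewrite Rminus_0_r.
    now apply is_series_scal_R, is_series_qexp_inv. }
  assert (Hsum : is_series (fun n => qexp_inv_coef n * x ^ n)
                   (qexp (/ Q) (x / Q) + (1 - / Q) * x * qexp (/ Q) x)).
  { eapply is_series_ext_R; [|apply is_series_plus_R; [now apply is_series_qexp_inv | exact Ht]].
    intros [|n]; simpl t; [simpl; ring|].
    transitivity (qexp_inv_coef (S n) * (x / Q) ^ S n
                  + x ^ S n * (qexp_inv_coef (S n) * (1 - (/ Q) ^ S n))).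
    - rewrite qexp_inv_coef_S. simpl. ring.
    - unfold Rdiv. rewrite Rpow_mult_distr. ring. }
  pose proof (is_series_unique _ _ (is_series_qexp_inv x Hx)).
  pose proof (is_series_unique _ _ Hsum). lra.
Qed.

Lemma qexp_opp_div x : qexp Q (- x) = (1 - (1 - / Q) * x) * qexp Q (- (x / Q)).
Proof.
  rewrite !qexp_qser by exact Q_ge_2.
  replace ((Q - 1) * - x) with (Q * ((Q - 1) * - (x / Q))) by (field; lra).
  rewrite qser_mul_q by exact Q_ge_2. f_equal. field. lra.
Qed.

Lemma qexp_inv_mul_qexp_opp x : Rabs x < 1 -> qexp (/ Q) x * qexp Q (- x) = 1.
Proof.
  intros Hx. pose proof inv_pos_lt_1.
  set (F := fun z => qexp (/ Q) z * qexp Q (- z)).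
  assert (F_div : forall z, Rabs z < 1 -> F (z / Q) = F z).
  { intros z Hz. unfold F. rewrite qexp_inv_div, (qexp_opp_div z) by exact Hz. ring. }
  assert (F_iter : forall k, F (x * (/ Q) ^ k) = F x).
  { induction k as [|k IH]; [now rewrite Rmult_1_r|].
    replace (x * (/ Q) ^ S k) with (x * (/ Q) ^ k / Q) by (simpl; field; lra).
    rewrite F_div; [exact IH|].
    rewrite Rabs_mult, <- RPow_abs, (Rabs_pos_eq (/ Q)) by lra.
    assert ((/ Q) ^ k <= 1) by (rewrite <- (pow1 k); apply pow_incr; lra).
    pose proof (Rabs_pos x). assert (0 <= (/ Q) ^ k) by (apply pow_le; lra). nra. }
  assert (F_cont : continuity_pt F 0).
  { apply continuity_pt_ext with
      (fun z => PSeries qexp_inv_coef z * qser Q ((Q - 1) * - z)).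
    { intros z. unfold F. now rewrite qexp_inv_PSeries, qexp_qser. }
    apply continuity_pt_mult.
    - apply PSeries_continuity, abs_lt_CV_radius_qexp_inv_coef. rewrite Rabs_R0. lra.
    - apply (continuity_pt_comp (fun z => (Q - 1) * - z) (qser Q)); [reg|].
      apply PSeries_continuity. now rewrite CV_radius_qser. }
  assert (F0 : F 0 = 1).
  { unfold F. rewrite Ropp_0, qexp_inv_PSeries, qexp_qser, Rmult_0_r, PSeries_0 by exact Q_ge_2.
    unfold qser. rewrite PSeries_0. unfold qexp_inv_coef. simpl. field. }
  assert (Hu : Un_cv (fun k => x * (/ Q) ^ k) 0).
  { apply is_lim_seq_Reals.
    pose proof (is_lim_seq_scal_l _ x _ (is_lim_seq_geom (/ Q) ltac:(rewrite Rabs_pos_eq; lra)))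
      as L.
    simpl in L. now rewrite Rmult_0_r in L. }
  fold (F x). rewrite <- F0.
  apply UL_sequence with (fun k => F (x * (/ Q) ^ k)).
  - intros eps Heps. exists 0%nat. intros k _. rewrite F_iter, Rdist_eq. exact Heps.
  - exact (continuity_seq F _ 0 F_cont Hu).
Qed.

End QExpInv.

Theorem corollary4p5p6 (q : nat) (xi : Q) :
  (1 < q)%nat -> Q2R xi <> 0 ->
  (~ is_rational (qexp (INR q) (Q2R xi)) \/ qexp (INR q) (Q2R xi) = 0) /\
  (Rabs (Q2R xi) < 1 -> ~ is_rational (qexp (/ INR q) (Q2R xi))).
Proof.
  intros Hq Hxi.
  assert (HQ : 2 <= INR q) by (apply (le_INR 2) in Hq; simpl in Hq; lra).
  split.
  - destruct (classic (qexp (INR q) (Q2R xi) = 0)) as [E | E]; [now right | left].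
    now apply qexp_irrational.
  - intros Hlt [r Hr].
    pose proof (qexp_inv_mul_qexp_opp (INR q) HQ (Q2R xi) Hlt) as Hprod.
    rewrite Hr in Hprod.
    assert (Hr0 : Q2R r <> 0) by (intros E; rewrite E, Rmult_0_l in Hprod; lra).
    apply (qexp_irrational q (- xi) Hq); rewrite Q2R_opp.
    + lra.
    + intros E. rewrite E, Rmult_0_r in Hprod. lra.
    + exists (/ r)%Q. rewrite Q2R_inv.
      * apply (Rmult_eq_reg_l (Q2R r)); [rewrite Hprod; field |]; exact Hr0.
      * intros E. apply Hr0. rewrite (Qeq_eqR _ _ E). unfold Q2R. simpl. ring.
Qed.
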